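(* Let $b_i,b_j\in\mathbb{Z}^2$ be linearly independent and lie in the interiors of opposite quadrants of $\mathbb{Z}^2$, let $\mathcal{B}[i,j]$ be the $2\times2$ matrix with rows $b_i,b_j$, and $c[i,j]=(c_i,c_j)\in\mathbb{C}^2$. Then the space of Puiseux polynomial solutions of $\mathrm{Horn}(\mathcal{B}[i,j],c[i,j])$ has dimension $\nu_{ij}=\min(|b_{i1}b_{j2}|,|b_{i2}b_{j1}|)$.
   Context: For an integer matrix $\mathcal{B}'$ with rows $b'_k=(b'_{k1},b'_{k2})$ and $c'$ a complex vector, $\mathrm{Horn}(\mathcal{B}',c')=D_2\langle H_1,H_2\rangle$, where $H_r=Q_r-y_rP_r$, $P_r=\prod_{k:b'_{kr}<0}\prod_{l=0}^{|b'_{kr}|-1}(b'_k\cdot\theta_y+c'_k-l)$, $Q_r=\prod_{k:b'_{kr}>0}\prod_{l=0}^{b'_{kr}-1}(b'_k\cdot\theta_y+c'_k-l)$, $b'_k\cdot\theta_y=b'_{k1}y_1\partial_{y_1}+b'_{k2}y_2\partial_{y_2}$; $D_2$ is the Weyl algebra in $y_1,y_2$. A Puiseux polynomial is a finite linear combination of monomials with complex exponents. *)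

From HB Require Import structures.
From mathcomp Require Import all_boot all_order all_algebra.
From mathcomp Require Import reals.
From mathcomp Require Import complex.
Set Implicit Arguments. Unset Strict Implicit. Unset Printing Implicit Defensive.
Import Order.TTheory GRing.Theory Num.Theory.
Local Open Scope ring_scope.

Section Horn.
Variable R : realType.
Local Notation C := R[i].

(* A Puiseux polynomial in y1,y2 = finite formal linear combination of
   monomials y^a = y1^(a.1) y2^(a.2), a in C^2; we represent it by its
   coefficient map a |-> coefficient of y^a. *)
Definition ppoly := (C * C)%type -> C.

Definition is_puiseux (f : ppoly) : Prop :=
  exists s : seq (C * C), forall a, f a != 0 -> a \in s.

Definition pop := ppoly -> ppoly.

Definition expo (r : 'I_2) (a : C * C) : C := if r == 0 then a.1 else a.2.
Definition unitv (r : 'I_2) : C * C := if r == 0 then (1, 0) else (0, 1).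

(* Euler operator theta_{y_r} = y_r d/dy_r : y^a |-> a_r y^a *)
Definition theta (r : 'I_2) : pop := fun f a => expo r a * f a.
(* multiplication by y_r : y^a |-> y^(a + e_r) *)
Definition mulY (r : 'I_2) : pop := fun f a => f (a.1 - (unitv r).1, a.2 - (unitv r).2).

Definition hfactor (B : 'M[int]_2) (c : 'I_2 -> C) (k : 'I_2) (l : nat) : pop :=
  fun f a => (B k 0)%:~R * theta 0 f a + (B k 1)%:~R * theta 1 f a
             + (c k - l%:R) * f a.

Definition prodop (s : seq pop) : pop := foldr (fun g h => g \o h) id s.

Definition Pop (B : 'M[int]_2) (c : 'I_2 -> C) (r : 'I_2) : pop :=
  prodop [seq hfactor B c k l | k <- [seq k <- enum 'I_2 | B k r < 0],
                                l <- iota 0 (absz (B k r))].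
Definition Qop (B : 'M[int]_2) (c : 'I_2 -> C) (r : 'I_2) : pop :=
  prodop [seq hfactor B c k l | k <- [seq k <- enum 'I_2 | 0 < B k r],
                                l <- iota 0 (absz (B k r))].

Definition Hop (B : 'M[int]_2) (c : 'I_2 -> C) (r : 'I_2) : pop :=
  fun f a => Qop B c r f a - mulY r (Pop B c r f) a.

(* Puiseux polynomial solutions of Horn(B,c) = D_2<H_1,H_2>:
   annihilated by the generators (equivalently by the whole left ideal). *)
Definition horn_sol (B : 'M[int]_2) (c : 'I_2 -> C) (f : ppoly) : Prop :=
  is_puiseux f /\ forall r a, Hop B c r f a = 0.

Definition horn_puiseux_dim (B : 'M[int]_2) (c : 'I_2 -> C) (n : nat) : Prop :=
  exists F : 'I_n -> ppoly,
    [/\ forall i, horn_sol B c (F i),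
        (forall k : 'I_n -> C,
           (forall a, \sum_(i < n) k i * F i a = 0) -> forall i, k i = 0) &
        (forall f, horn_sol B c f ->
           exists k : 'I_n -> C, forall a, f a = \sum_(i < n) k i * F i a)].

End Horn.

(* In the coordinates [x_k = b_k . a + c_k] on exponents, [b_k . theta_y + c_k - l]
   multiplies [y^a] by [x_k - l], so [H_1 f = H_2 f = 0] become two first-order
   recurrences on the coefficients.  Since each column of [B] has entries of
   opposite signs, a finitely supported solution lives on natural exponents, and
   its coefficients, normalised by [n.1! n.2!], are invariant under the lattice
   translations [(a_0, -b_0)] and [(a_1, -b_1)], where [a_r], [b_r] are the
   absolute values of the entries of column [r].  When [a_0 b_1 < a_1 b_0] a
   linear weight decreases along the first translation and increases along the
   second, so an invariant finitely supported function is determined by its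
   values on the rectangle [[0, a_0) x [0, b_1)]; conversely, the indicator of
   the points reachable from a rectangle point is invariant and is a Kronecker
   delta on the rectangle.  So the solutions have a basis indexed by the
   rectangle, of size [a_0 b_1 = min (a_0 b_1) (a_1 b_0)]. *)

From HB Require Import structures.
From mathcomp Require Import all_boot all_order all_algebra.
From mathcomp Require Import reals complex boolp.
From mathcomp Require Import zify ring.
Import Order.TTheory GRing.Theory Num.Theory.
Set Implicit Arguments. Unset Strict Implicit. Unset Printing Implicit Defensive.
Local Open Scope ring_scope.

Definition finsupp (T : eqType) (V : nmodType) (g : T -> V) : Prop :=
  exists s : seq T, forall x, g x != 0 -> x \in s.

Section FiniteSupport.
Variables (T : eqType) (K : nzRingType).

Lemma finsuppB (f g : T -> K) : finsupp f -> finsupp g -> finsupp (f \- g).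
Proof.
move=> [s fs] [t gt]; exists (s ++ t) => x fgx; rewrite mem_cat.
have [/fs -> //|/negPn/eqP fx0] := boolP (f x != 0).
by move: fgx; rewrite /= fx0 sub0r oppr_eq0 => /gt ->; rewrite orbT.
Qed.

Lemma finsupp_lincomb n (k : 'I_n -> K) (h : 'I_n -> T -> K) :
  (forall i, finsupp (h i)) -> finsupp (fun x => \sum_i k i * h i x).
Proof.
move=> /fin_all_exists [s hs]; exists (flatten [seq s i | i <- enum 'I_n]) => x.
apply: contraNT => /flattenP nx; rewrite big1 // => i _.
have [/hs hsx|/negPn/eqP ->] := boolP (h i x != 0); last by rewrite mulr0.
by case: nx; exists (s i) => //; apply: map_f; rewrite mem_enum.
Qed.

End FiniteSupport.

Lemma finsupp_box (V : nmodType) (h : nat * nat -> V) M :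
  (forall n, h n != 0 -> (n.1 <= M)%N /\ (n.2 <= M)%N) -> finsupp h.
Proof.
move=> hM; exists [seq (x, y) | x <- iota 0 M.+1, y <- iota 0 M.+1] => -[x y] /hM [hx hy].
by apply: allpairs_f; rewrite mem_iota ltnS.
Qed.

Lemma finsupp_comp (T : eqType) (V : nmodType) (X Y : T -> T) (f : T -> V) :
  cancel Y X -> finsupp f -> finsupp (f \o Y).
Proof.
by move=> YK [s fs]; exists (map X s) => x /fs Yx; rewrite -[x]YK map_f.
Qed.

Lemma finsupp_no_orbit (T : eqType) (V : nmodType) (g : T -> V) (x : nat -> T) :
  finsupp g -> injective x -> g (x 0%N) != 0 ->
  (forall k, g (x k) != 0 -> g (x k.+1) != 0) -> False.
Proof.
move=> [s gs] x_inj gx0 gxS.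
have xs : {subset [seq x k | k <- iota 0 (size s).+1] <= s}.
  by move=> _ /mapP[k _ ->]; apply: gs; elim: k.
have uniq_x : uniq [seq x k | k <- iota 0 (size s).+1] by rewrite map_inj_uniq // iota_uniq.
have := uniq_leq_size uniq_x xs.
by rewrite size_map size_iota ltnn.
Qed.

Section FallingFactorial.
Variable K : idomainType.

Definition rfall (x : K) (n : nat) : K := \prod_(l < n) (x - l%:R).

Lemma rfall_iota x n : rfall x n = \prod_(l <- iota 0 n) (x - l%:R).
Proof. by rewrite /rfall -(big_mkord xpredT (fun l => x - l%:R)) /index_iota subn0. Qed.

Lemma rfall_eq0 x n : rfall x n = 0 <-> exists2 l, (l < n)%N & x = l%:R.
Proof.
split=> [/eqP/prodf_eq0 [l _ /eqP/subr0_eq xl]|[l ln ->]]; first by exists l.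
by apply/eqP/prodf_eq0; exists (Ordinal ln) => //; rewrite subrr.
Qed.

Lemma rfall_neq0 x n : (forall m : nat, x != m%:R) -> rfall x n != 0.
Proof. by move=> xN; apply/eqP => /rfall_eq0 [l _ xl]; move: (xN l); rewrite xl eqxx. Qed.

Lemma rfall_nat m n : rfall m%:R n = (m ^_ n)%:R.
Proof.
have [lt_mn|le_nm] := ltnP m n.
  by rewrite ffact_small //; apply/rfall_eq0; exists m.
rewrite ffact_prod natr_prod; apply: eq_bigr => l _.
by rewrite natrB // ltnW // (leq_trans (ltn_ord l)).
Qed.

End FallingFactorial.

Definition step (a b : nat) (P Q : nat * nat) : Prop :=
  P.1 = (Q.1 + a)%N /\ Q.2 = (P.2 + b)%N.

Section Lattice.
Variables a0 b0 a1 b1 : nat.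
Hypothesis a0b1_lt : (a0 * b1 < a1 * b0)%N.

Definition weight (P : nat * nat) : nat := ((b0 + b1) * P.1 + (a0 + a1) * P.2)%N.

Definition in_rect (P : nat * nat) : Prop := (P.1 < a0)%N /\ (P.2 < b1)%N.

Lemma weight_step0 P Q : step a0 b0 P Q -> (weight P < weight Q)%N.
Proof. rewrite /step /weight => -[-> ->]; nia. Qed.

Lemma weight_step1 P Q : step a1 b1 P Q -> (weight Q < weight P)%N.
Proof. rewrite /step /weight => -[-> ->]; nia. Qed.

Lemma leq_weight P : (P.1 <= weight P)%N /\ (P.2 <= weight P)%N.
Proof.
have b0_gt0 : (0 < b0)%N by move: a0b1_lt; case: b0; rewrite ?muln0.
have a1_gt0 : (0 < a1)%N by move: a0b1_lt; case: a1; rewrite ?mul0n.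
by rewrite /weight; split; nia.
Qed.

Section Invariant.
Variable V : nmodType.
Implicit Type h : nat * nat -> V.

Definition invariant h : Prop :=
  (forall P Q, step a0 b0 P Q -> h P = h Q) /\ (forall P Q, step a1 b1 P Q -> h P = h Q).

(* Off the rectangle one of the two steps leads to a point of larger weight
   with the same value, so induction on [M - weight P] empties the support. *)
Lemma invariant_rect_eq0 h : invariant h -> finsupp h ->
  (forall P, in_rect P -> h P = 0) -> forall P, h P = 0.
Proof.
move=> [inv0 inv1] [s hs] h_rect; pose M := \max_(Q <- s) weight Q.
have bnd P : h P != 0 -> (weight P <= M)%N by move/hs/leq_bigmax_seq; apply.
suff: forall n P, (M - weight P < n)%N -> h P = 0 by move=> H P; exact: (H _ P (ltnSn _)).
elim=> [//|n IH] P hn; case: (eqVneq (h P) 0) => // hP.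
have hPM := bnd _ hP.
have IHQ Q : h P = h Q -> (weight P < weight Q)%N -> h P = 0.
  move=> ePQ ltPQ; rewrite ePQ; apply: IH.
  by have := bnd Q; rewrite -ePQ hP => /(_ isT); lia.
case: (ltnP P.1 a0) => h1; first case: (ltnP P.2 b1) => h2; first exact: h_rect.
- have e : step a1 b1 ((P.1 + a1)%N, (P.2 - b1)%N) P by rewrite /step /=; lia.
  exact: IHQ (esym (inv1 _ _ e)) (weight_step1 e).
- have e : step a0 b0 P ((P.1 - a0)%N, (P.2 + b0)%N) by rewrite /step /=; lia.
  exact: IHQ (inv0 _ _ e) (weight_step0 e).
Qed.

End Invariant.

(* The points reachable from [p] by adding [(a0, -b0)] and [(-a1, b1)]
   without leaving the quadrant. *)
Inductive reach (p : nat * nat) : nat * nat -> Prop :=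
| reach_refl : reach p p
| reach_step0 Q P : reach p Q -> step a0 b0 P Q -> reach p P
| reach_step1 P Q : reach p P -> step a1 b1 P Q -> reach p Q.

Lemma reach_weight p P : reach p P -> P = p \/ (weight P < weight p)%N.
Proof.
elim=> [|Q {}P _ IH e|{}P Q _ IH e]; [by left|right|right].
- by have := weight_step0 e; case: IH => [->|]; lia.
- by have := weight_step1 e; case: IH => [->|]; lia.
Qed.

Section FromRect.
Variable p : nat * nat.
Hypothesis p_rect : in_rect p.

(* Two steps of different kinds commute, which lets a backward step be
   pushed back to the start [p], where it is impossible. *)
Lemma reach_step0_rev X Q : reach p X -> step a0 b0 X Q -> reach p Q.
Proof.
case: p_rect => hp1 hp2 mX; elim: mX Q => [|Y {}X mY IH eXY|Y {}X mY IH eYX] Q eXQ.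
- by case: eXQ => ? _; lia.
- by case: eXY eXQ => ? ? [? ?]; have -> : Q = Y by apply: injective_projections; lia.
- have eYQ' : step a0 b0 Y ((Q.1 + a1)%N, (Y.2 + b0)%N).
    by case: eYX eXQ => ? ? [? ?]; rewrite /step /=; lia.
  by apply: reach_step1 (IH _ eYQ') _; case: eYX eXQ => ? ? [? ?]; rewrite /step /=; lia.
Qed.

Lemma reach_step1_rev X P : reach p X -> step a1 b1 P X -> reach p P.
Proof.
case: p_rect => hp1 hp2 mX; elim: mX P => [|Y {}X mY IH eXY|Y {}X mY IH eYX] P ePX.
- by case: ePX => _ ?; lia.
- have eP'Y : step a1 b1 ((Y.1 + a1)%N, (P.2 + b0)%N) Y.
    by case: eXY ePX => ? ? [? ?]; rewrite /step /=; lia.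
  by apply: reach_step0 (IH _ eP'Y) _; case: eXY ePX => ? ? [? ?]; rewrite /step /=; lia.
- by case: eYX ePX => ? ? [? ?]; have -> : P = Y by apply: injective_projections; lia.
Qed.

Lemma reach_sym X q : reach q X -> reach p X -> reach p q.
Proof.
elim=> [//|Y {}X _ IH e|Y {}X _ IH e] mX.
- exact/IH/(reach_step0_rev mX e).
- exact/IH/(reach_step1_rev mX e).
Qed.

End FromRect.

Lemma reach_rect p q : in_rect p -> in_rect q -> reach p q -> q = p.
Proof.
move=> hp hq mq; have mp := reach_sym hq mq (reach_refl q).
by case: (reach_weight mq) => // h1; case: (reach_weight mp) => // h2; lia.
Qed.

End Lattice.

Section NaturalPoints.
Variable K : numFieldType.
Implicit Types (h : nat * nat -> K) (g : K * K -> K).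

Lemma rfall_fact m n : (n <= m)%N -> rfall m%:R n * (m - n)`!%:R = m`!%:R :> K.
Proof. by move=> le_nm; rewrite rfall_nat -natrM ffact_fact. Qed.

Lemma rfall_nat_neq0 m n : (n <= m)%N -> rfall m%:R n != 0 :> K.
Proof. by move=> le_nm; rewrite rfall_nat pnatr_eq0 -lt0n ffact_gt0. Qed.

Lemma natr_fact_neq0 m : m`!%:R != 0 :> K.
Proof. by rewrite pnatr_eq0 -lt0n fact_gt0. Qed.

Definition natc (n : nat * nat) : K * K := (n.1%:R, n.2%:R).

Lemma natc_inj : injective natc.
Proof. by move=> [a b] [c d] [/eqP + /eqP]; rewrite !eqr_nat => /eqP -> /eqP ->. Qed.

Definition unnatc (P : K * K) : option (nat * nat) :=
  if pselect (exists n, P = natc n) is left e then Some (sval (cid e)) else None.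

Variant unnatc_spec (P : K * K) : option (nat * nat) -> Type :=
| UnnatcSome n of P = natc n : unnatc_spec P (Some n)
| UnnatcNone of (forall n, P <> natc n) : unnatc_spec P None.

Lemma unnatcP P : unnatc_spec P (unnatc P).
Proof.
rewrite /unnatc; case: pselect => [e|Nn]; first by case: (cid e) => n /= ->; exact: UnnatcSome.
by apply: UnnatcNone => n Pn; apply: Nn; exists n.
Qed.

Lemma unnatc_natc n : unnatc (natc n) = Some n.
Proof. by case: unnatcP => [m /natc_inj ->|/(_ n)]. Qed.

Definition factp (n : nat * nat) : K := (n.1`! * n.2`!)%:R.

Lemma factp_neq0 n : factp n != 0.
Proof. by rewrite /factp natrM mulf_neq0 ?natr_fact_neq0. Qed.

(* [embed h] has the coefficient [h n / (n.1! n.2!)] at the exponent [natc n]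
   and vanishes at non-natural exponents; this normalisation turns [recur]
   into invariance of [h] under a lattice step. *)
Definition embed h (P : K * K) : K :=
  if unnatc P is Some n then h n / factp n else 0.

Definition ncoef g (n : nat * nat) : K := g (natc n) * factp n.

Lemma embed_natc h n : embed h (natc n) = h n / factp n.
Proof. by rewrite /embed unnatc_natc. Qed.

Lemma embed_lincomb m (k : 'I_m -> K) (h : 'I_m -> nat * nat -> K) P :
  embed (fun n => \sum_i k i * h i n) P = \sum_i k i * embed (h i) P.
Proof.
rewrite /embed; case: unnatcP => [n _|_]; last by rewrite big1 // => i _; rewrite mulr0.
by rewrite mulr_suml; apply: eq_bigr => i _; rewrite mulrA.
Qed.

Lemma ncoefK g : (forall P, g P != 0 -> exists n, P = natc n) -> embed (ncoef g) =1 g.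
Proof.
move=> gN P; rewrite /embed /ncoef; case: unnatcP => [n ->|Nn]; first by rewrite mulfK ?factp_neq0.
by apply/esym/eqP; apply: contraT => /gN [n /Nn].
Qed.

Lemma embed_finsupp h : finsupp h -> finsupp (embed h).
Proof.
move=> [s hs]; exists (map natc s) => P; rewrite /embed.
case: unnatcP => [n -> hn|]; last by rewrite eqxx.
by apply: map_f; apply: hs; apply: contraNneq hn => ->; rewrite mul0r.
Qed.

Lemma finsupp_ncoef g : finsupp g -> finsupp (ncoef g).
Proof.
move=> [s gs]; exists (pmap unnatc s) => n gn.
rewrite mem_pmap -unnatc_natc map_f // gs //.
by apply: contraNneq gn; rewrite /ncoef => ->; rewrite mul0r.
Qed.

(* The equation [H_r f = 0] in the coordinates [xcoords] below, when the
   entries of column [r] of the matrix have opposite signs and absolute values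
   [A], [B] (see [hop_recur]). *)
Definition recur (A B : nat) g : Prop := forall P : K * K,
  rfall P.1 A * g P = rfall (P.2 + B%:R) B * g (P.1 - A%:R, P.2 + B%:R).

Lemma recur_embed A B h : (forall P Q, step A B P Q -> h P = h Q) -> recur A B (embed h).
Proof.
move=> h_step P; case: (unnatcP P) => [[n1 n2] ->|NP].
  rewrite embed_natc /natc /=; have [le_An1|lt_n1A] := leqP A n1.
    pose Q := ((n1 - A)%N, (n2 + B)%N).
    have -> : (n1%:R - A%:R, n2%:R + B%:R) = natc Q by rewrite /natc /= natrB // natrD.
    rewrite embed_natc -(h_step (n1, n2) Q) /factp /=; last by rewrite /step /=; lia.
    rewrite !natrM -(rfall_fact le_An1) -natrD -(rfall_fact (leq_addl n2 B)) addnK.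
    by field; rewrite !natr_fact_neq0 !rfall_nat_neq0 // leq_addl.
  rewrite (_ : rfall _ _ = 0) ?mul0r; last by apply/rfall_eq0; exists n1.
  rewrite /embed; case: unnatcP => [[m1 m2] [/eqP + _]|_]; last by rewrite mulr0.
  by rewrite subr_eq -natrD eqr_nat => /eqP; lia.
rewrite {1}/embed; case: (unnatcP P) => [m /NP //|_]; rewrite mulr0 /embed.
case: unnatcP => [n [e1 e2]|_]; last by rewrite mulr0.
have [le_Bn2|lt_n2B] := leqP B n.2.
  case: (NP ((n.1 + A)%N, (n.2 - B)%N)); rewrite /natc /= natrD natrB // -e1 -e2.
  by rewrite subrK addrK -surjective_pairing.
by rewrite (_ : rfall _ _ = 0) ?mul0r //; apply/rfall_eq0; exists n.2.
Qed.

Lemma recur_ncoef A B g : recur A B g -> forall P Q, step A B P Q -> ncoef g P = ncoef g Q.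
Proof.
move=> rg [p1 p2] [q1 q2] [/= -> ->].
have := rg (natc ((q1 + A)%N, p2)); rewrite /natc /= natrD addrK -!natrD => e.
rewrite /ncoef /factp /natc /= !natrM -(rfall_fact (leq_addl q1 A)).
rewrite -(rfall_fact (leq_addl p2 B)) !addnK.
transitivity (rfall (q1 + A)%:R A * g ((q1 + A)%:R, p2%:R) * (q1`!%:R * p2`!%:R)); first ring.
by rewrite e; ring.
Qed.

Lemma recur_support A B g : (0 < A)%N -> (0 < B)%N -> finsupp g -> recur A B g ->
  forall P, g P != 0 -> exists n, P = natc n.
Proof.
move=> A_gt0 B_gt0 fg rg P gP.
have natr_mulI D : (0 < D)%N -> injective (fun k => (k * D)%:R : K).
  by move=> D_gt0 k j /eqP; rewrite eqr_nat eqn_pmul2r // => /eqP.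
have [n2 e2] : exists n2 : nat, P.2 = n2%:R.
  apply: contrapT => P2N; pose x k := (P.1 + (k * A)%:R, P.2 - (k * B)%:R).
  apply: (finsupp_no_orbit (x := x) fg).
  - by move=> k j /(congr1 fst) /addrI /natr_mulI; apply.
  - by rewrite /x !mul0n subr0 addr0 -surjective_pairing.
  move=> k gxk; have := rg (x k.+1).
  have -> : (x k.+1).2 + B%:R = (x k).2 by rewrite /x /= mulSn natrD; ring.
  have -> : ((x k.+1).1 - A%:R, (x k).2) = x k by rewrite /x /= mulSn natrD; congr (_, _); ring.
  apply: contra_eq_neq => ->; rewrite mulr0 eq_sym mulf_neq0 // rfall_neq0 // => m.
  apply/eqP => xkm; apply: P2N; exists (m + k * B)%N.
  by rewrite natrD -xkm /x /= subrK.
have [n1 e1] : exists n1 : nat, P.1 = n1%:R.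
  apply: contrapT => P1N; pose x k := (P.1 - (k * A)%:R, P.2 + (k * B)%:R).
  apply: (finsupp_no_orbit (x := x) fg).
  - by move=> k j /(congr1 fst) /addrI /oppr_inj /natr_mulI; apply.
  - by rewrite /x !mul0n subr0 addr0 -surjective_pairing.
  move=> k gxk; have := rg (x k).
  have -> : ((x k).1 - A%:R, (x k).2 + B%:R) = x k.+1.
    by rewrite /x /= mulSn natrD; congr (_, _); ring.
  apply: contra_eq_neq => ->; rewrite mulr0 mulf_neq0 // rfall_neq0 // => m.
  apply/eqP => xkm; apply: P1N; exists (m + k * A)%N.
  by rewrite natrD -xkm /x /= subrK.
by exists (n1, n2); rewrite /natc -e1 -e2 -surjective_pairing.
Qed.

Definition rec_sol (A0 B0 A1 B1 : nat) g : Prop :=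
  [/\ finsupp g, recur A0 B0 g & recur A1 B1 g].

End NaturalPoints.

Arguments natc {K} n.
Arguments factp {K} n.
Arguments factp_neq0 {K} n.

(* [horn_puiseux_dim B c n] unfolds to [has_basis (horn_sol B c) n]. *)
Definition has_basis (T : Type) (K : nzRingType) (sol : (T -> K) -> Prop) (n : nat) : Prop :=
  exists F : 'I_n -> T -> K,
    [/\ forall i, sol (F i),
        (forall k : 'I_n -> K, (forall x, \sum_i k i * F i x = 0) -> forall i, k i = 0) &
        (forall f, sol f -> exists k : 'I_n -> K, forall x, f x = \sum_i k i * F i x)].

Section HasBasis.
Variables (T : Type) (K : nzRingType) (n : nat).
Implicit Type sol : (T -> K) -> Prop.

Lemma has_basis_ext sol sol' : has_basis sol n ->
  (forall f, sol f <-> sol' f) -> has_basis sol' n.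
Proof.
move=> [F [Fsol Ffree Fspan]] eq_sol; exists F; split=> // [i|f /eq_sol]; last exact: Fspan.
exact/eq_sol.
Qed.

Lemma has_basis_comp sol (X Y : T -> T) : cancel X Y -> cancel Y X ->
  has_basis sol n -> has_basis (fun f => sol (f \o Y)) n.
Proof.
move=> XK YK [F [Fsol Ffree Fspan]]; exists (fun i => F i \o X); split.
- by move=> i; rewrite (_ : _ \o Y = F i) //; apply: funext => x /=; rewrite YK.
- by move=> k kF; apply: Ffree => x; rewrite -(YK x); apply: kF.
- move=> f /Fspan [k kF]; exists k => x.
  by rewrite -{1}(XK x); apply: kF.
Qed.

End HasBasis.

Section Basis.
Variable K : numFieldType.
Variables a0 b0 a1 b1 : nat.
Hypotheses (a0b1_lt : (a0 * b1 < a1 * b0)%N) (a0_gt0 : (0 < a0)%N) (b0_gt0 : (0 < b0)%N)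
  (b1_gt0 : (0 < b1)%N).

Local Notation reach := (reach a0 b0 a1 b1).
Local Notation in_rect := (in_rect a0 b1).
Local Notation invariant := (invariant a0 b0 a1 b1).

Definition reach_char (p q : nat * nat) : K := `[< reach p q >]%:R.

Lemma reach_char_invariant p : in_rect p -> invariant (reach_char p).
Proof.
move=> p_rect; split=> P Q e; rewrite /reach_char; congr ((nat_of_bool _)%:R).
- by apply: asbool_equiv_eq; split=> [/reach_step0_rev|/reach_step0]; apply.
- by apply: asbool_equiv_eq; split=> [/reach_step1|/reach_step1_rev]; apply.
Qed.

Lemma reach_char_finsupp p : finsupp (reach_char p).
Proof.
apply: (finsupp_box (M := weight a0 b0 a1 b1 p)) => q; rewrite /reach_char pnatr_eq0 eqb0 negbK.
have [w1 w2] := leq_weight a0b1_lt q.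
move=> /asboolP/(reach_weight a0b1_lt) [<-|lt_qp] //.
by split; apply: leq_trans (ltnW lt_qp).
Qed.

Lemma reach_char_rect p q : in_rect p -> in_rect q -> reach_char p q = (q == p)%:R.
Proof.
move=> p_rect q_rect; rewrite /reach_char; congr ((nat_of_bool _)%:R).
apply/asboolP/eqP => [|->]; [exact: reach_rect | exact: reach_refl].
Qed.

Definition pt (i : 'I_(a0 * b1)) : nat * nat := ((i %/ b1)%N, (i %% b1)%N).

Lemma pt_rect i : in_rect (pt i).
Proof. by split; rewrite /pt /= ?ltn_divLR ?ltn_pmod. Qed.

Lemma pt_inj : injective pt.
Proof.
move=> i j [e1 e2]; apply: val_inj => /=.
by rewrite [LHS](divn_eq _ b1) [RHS](divn_eq _ b1) e1 e2.
Qed.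

Lemma rect_pt q : in_rect q -> exists i, pt i = q.
Proof.
case: q => q1 q2 [/= q1_lt q2_lt]; have i_lt : (q1 * b1 + q2 < a0 * b1)%N by nia.
exists (Ordinal i_lt); rewrite /pt /=.
by rewrite divnMDl // modnMDl divn_small // modn_small // addn0.
Qed.

Definition basis (i : 'I_(a0 * b1)) : K * K -> K := embed (reach_char (pt i)).

Lemma basis_rec_sol i : rec_sol a0 b0 a1 b1 (basis i).
Proof.
have [inv0 inv1] := reach_char_invariant (pt_rect i).
by split; [exact/embed_finsupp/reach_char_finsupp | exact: recur_embed ..].
Qed.

Lemma basis_natc i j : basis i (natc (pt j)) = (pt j == pt i)%:R / factp (pt j).
Proof. by rewrite /basis embed_natc reach_char_rect //; exact: pt_rect. Qed.

Lemma basis_free (k : 'I_(a0 * b1) -> K) :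
  (forall P, \sum_i k i * basis i P = 0) -> forall i, k i = 0.
Proof.
move=> kB j; have := kB (natc (pt j)); rewrite (bigD1 j) //= big1 => [|i ij].
  rewrite basis_natc eqxx mul1r addr0 => /eqP.
  by rewrite mulf_eq0 invr_eq0 (negbTE (factp_neq0 _)) orbF => /eqP.
by rewrite basis_natc (inj_eq pt_inj) eq_sym (negbTE ij) mul0r mulr0.
Qed.

(* [ncoef g] and the combination of the [reach_char (pt i)] with coefficients
   [ncoef g (pt i)] are both invariant and agree on the rectangle. *)
Lemma basis_span g : rec_sol a0 b0 a1 b1 g ->
  forall P, g P = \sum_i ncoef g (pt i) * basis i P.
Proof.
case=> g_fin rec0 rec1.
pose h n := \sum_i ncoef g (pt i) * reach_char (pt i) n.
have gh0 : forall n, (ncoef g \- h) n = 0.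
  apply: (invariant_rect_eq0 a0b1_lt) => [| |q /rect_pt [j <-]].
  - split=> P Q e /=; rewrite (recur_ncoef _ e) //; congr (_ - _); apply: eq_bigr => i _;
      have [inv0 inv1] := reach_char_invariant (pt_rect i).
    + by rewrite (inv0 _ _ e).
    + by rewrite (inv1 _ _ e).
  - apply: finsuppB; first exact: finsupp_ncoef.
    by apply: finsupp_lincomb => i; exact: reach_char_finsupp.
  - have char_pt i : reach_char (pt i) (pt j) = (i == j)%:R.
      by rewrite (reach_char_rect (pt_rect _) (pt_rect _)) (inj_eq pt_inj) eq_sym.
    rewrite /h /= (bigD1 j) //= big1 => [|i ij]; first by rewrite char_pt eqxx mulr1 addr0 subrr.
    by rewrite char_pt (negbTE ij) mulr0.
have gh : ncoef g = h by apply: funext => n; apply/subr0_eq/gh0.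
move=> P; rewrite -(ncoefK (recur_support a0_gt0 b0_gt0 g_fin rec0)) {1}gh.
exact: embed_lincomb.
Qed.

Lemma rec_sol_has_basis : has_basis (@rec_sol K a0 b0 a1 b1) (a0 * b1).
Proof.
exists basis; split; [exact: basis_rec_sol | exact: basis_free |].
by move=> g /basis_span gB; exists (fun i => ncoef g (pt i)).
Qed.

End Basis.

Lemma rec_sol_dim (K : numFieldType) a0 b0 a1 b1 :
  (0 < a0)%N -> (0 < b0)%N -> (0 < a1)%N -> (0 < b1)%N -> (a0 * b1 != a1 * b0)%N ->
  has_basis (@rec_sol K a0 b0 a1 b1) (minn (a0 * b1) (a1 * b0)).
Proof.
move=> a0_gt0 b0_gt0 a1_gt0 b1_gt0; case: ltngtP => // [lt01|lt10] _.
  exact: rec_sol_has_basis.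
apply: (has_basis_ext (rec_sol_has_basis K lt10 a1_gt0 b1_gt0 b0_gt0)) => g.
by split=> -[].
Qed.

Lemma det_mx2 (K : comPzRingType) (A : 'M[K]_2) : \det A = A 0 0 * A 1 1 - A 0 1 * A 1 0.
Proof.
rewrite (expand_det_row A 0) !big_ord_recl big_ord0 addr0 /cofactor !det_mx11 !mxE /=.
have -> : lift 0 0 = 1 :> 'I_2 by apply: val_inj.
have -> : lift 1 0 = 0 :> 'I_2 by apply: val_inj.
by rewrite expr0 expr1; ring.
Qed.

Lemma absz_cross_neq (B : 'M[int]_2) : \det B != 0 ->
  B 0 0 * B 1 0 < 0 -> B 0 1 * B 1 1 < 0 ->
  muln (absz (B 0 0)) (absz (B 1 1)) != muln (absz (B 0 1)) (absz (B 1 0)).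
Proof.
rewrite det_mx2 => detB s0 s1; apply: contra detB => /eqP.
rewrite -!abszM => /eqP; rewrite -eqz_nat !abszE; apply/implyP/eqP.
by move: (B 0 0) (B 1 0) (B 0 1) (B 1 1) s0 s1 => ? ? ? ? *; nia.
Qed.

Lemma ord2_cases (r : 'I_2) : r = 0 \/ r = 1.
Proof. by case: r => [[|[|//]] r_lt]; [left|right]; apply: val_inj. Qed.

Lemma prod_filter_ord2 (K : comPzRingType) (P : pred 'I_2) (F : 'I_2 -> K) :
  \prod_(k <- [seq k <- enum 'I_2 | P k]) F k =
  (if P 0 then F 0 else 1) * (if P 1 then F 1 else 1).
Proof.
rewrite big_filter big_mkcond big_enum /= !big_ord_recl big_ord0 mulr1 /=.
by congr ((if P _ then F _ else 1) * (if P _ then F _ else 1)); apply: val_inj.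
Qed.

Lemma lt0_mul_cases (x y : int) : x * y < 0 -> (0 < x /\ y < 0) \/ (x < 0 /\ 0 < y).
Proof.
move=> xy; case: (ltrgtP x 0) => [x0|x0|x0]; last by rewrite x0 mul0r ltxx in xy.
- by right; rewrite -(nmulr_rlt0 _ x0).
- by left; rewrite -(pmulr_rlt0 _ x0).
Qed.

Section HornOperators.
Variable R : realType.
Local Notation C := R[i].
Variables (B : 'M[int]_2) (c : 'I_2 -> C).

(* [b_k . theta_y + c_k] acts on [y^a] as multiplication by [xcoord k a]. *)
Definition xcoord (k : 'I_2) (a : C * C) : C := (B k 0)%:~R * a.1 + (B k 1)%:~R * a.2 + c k.

Definition xcoords (a : C * C) : C * C := (xcoord 0 a, xcoord 1 a).

Lemma hfactorE k l (f : ppoly R) a : hfactor B c k l f a = (xcoord k a - l%:R) * f a.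
Proof. by rewrite /hfactor /theta /expo /xcoord /=; ring. Qed.

Lemma foldr_comp_mul (T : Type) (s : seq T) (g : T -> pop R) (m : T -> C * C -> C) (h : pop R) :
  (forall t f a, g t f a = m t a * f a) ->
  forall f a, foldr (fun g h => g \o h) h [seq g t | t <- s] f a = (\prod_(t <- s) m t a) * h f a.
Proof.
move=> gm; elim: s => [|t s IH] f a /=; first by rewrite big_nil mul1r.
by rewrite gm IH big_cons mulrA.
Qed.

Lemma prodop_hfactor (ks : seq 'I_2) (n : 'I_2 -> nat) f a :
  prodop [seq hfactor B c k l | k <- ks, l <- iota 0 (n k)] f a =
  (\prod_(k <- ks) rfall (xcoord k a) (n k)) * f a.
Proof.
elim: ks f a => [|k ks IH] f a /=; first by rewrite big_nil mul1r.
rewrite /prodop foldr_cat (@foldr_comp_mul _ _ _ (fun l a => xcoord k a - l%:R)).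
  by rewrite -/(prodop _) IH big_cons rfall_iota mulrA.
exact: hfactorE.
Qed.

Definition shift (r : 'I_2) (a : C * C) : C * C := (a.1 - (unitv R r).1, a.2 - (unitv R r).2).
Definition unshift (r : 'I_2) (a : C * C) : C * C := (a.1 + (unitv R r).1, a.2 + (unitv R r).2).

Lemma unshiftK r : cancel (unshift r) (shift r).
Proof. by move=> [a1 a2]; rewrite /shift /unshift /= !addrK. Qed.

Lemma xcoord_shift k r a : xcoord k (shift r a) = xcoord k a - (B k r)%:~R.
Proof. by rewrite /xcoord /shift /unitv; case: (ord2_cases r) => -> /=; ring. Qed.

Lemma HopE r f a : Hop B c r f a =
  (\prod_(k <- [seq k <- enum 'I_2 | 0 < B k r]) rfall (xcoord k a) (absz (B k r))) * f a -
  (\prod_(k <- [seq k <- enum 'I_2 | B k r < 0]) rfall (xcoord k (shift r a)) (absz (B k r)))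
    * f (shift r a).
Proof. by rewrite /Hop /Qop /Pop /mulY !prodop_hfactor. Qed.

Variable Y : C * C -> C * C.
Hypotheses (YK : cancel Y xcoords) (xcoordsK : cancel xcoords Y).

(* Column [r] has one positive and one negative entry, so [H_r] is, up to
   sign and a shift of the exponent, the recurrence [recur] in the coordinates [xcoords]. *)
Lemma hop_recur r f : B 0 r * B 1 r < 0 ->
  (forall a, Hop B c r f a = 0) <-> recur (absz (B 0 r)) (absz (B 1 r)) (f \o Y).
Proof.
set A := absz (B 0 r); set A' := absz (B 1 r).
pose defect P := rfall P.1 A * f (Y P) - rfall (P.2 + A'%:R) A' * f (Y (P.1 - A%:R, P.2 + A'%:R)).
have recurE : recur A A' (f \o Y) <-> forall P, defect P = 0.
  split=> rec P; first by rewrite /defect (rec P) subrr.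
  by apply/eqP; rewrite -subr_eq0; apply/eqP; exact: rec.
rewrite recurE; have fE a : f a = f (Y (xcoords a)) by rewrite xcoordsK.
case/lt0_mul_cases => [[B0r B1r]|[B0r B1r]].
- have E0 : (B 0 r)%:~R = A%:R :> C by rewrite -(gez0_abs (ltW B0r)) pmulrn.
  have E1 : (B 1 r)%:~R = - A'%:R :> C by rewrite -[B 1 r]opprK -(ltz0_abs B1r) mulrNz pmulrn.
  have HopD a : Hop B c r f a = defect (xcoords a).
    rewrite HopE !prod_filter_ord2 B0r B1r (lt_gtF B0r) (lt_gtF B1r) mul1r mulr1.
    rewrite /defect /= xcoord_shift E1 opprK fE [f (shift _ _)]fE.
    by rewrite /xcoords !xcoord_shift E0 E1 opprK.
  by split=> h P; [rewrite -[P]YK -HopD | rewrite HopD].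
- have E0 : (B 0 r)%:~R = - A%:R :> C by rewrite -[B 0 r]opprK -(ltz0_abs B0r) mulrNz pmulrn.
  have E1 : (B 1 r)%:~R = A'%:R :> C by rewrite -(gez0_abs (ltW B1r)) pmulrn.
  have HopD a : Hop B c r f a = - defect (xcoords (shift r a)).
    rewrite HopE !prod_filter_ord2 B1r B0r (lt_gtF B1r) (lt_gtF B0r) mul1r mulr1.
    rewrite /defect /xcoords /= !xcoord_shift E0 E1 opprK subrK addrK fE [f (shift _ _)]fE.
    by rewrite /xcoords !xcoord_shift E0 E1 opprK; ring.
  split=> h P; last by rewrite HopD h oppr0.
  by rewrite -[P]YK -[Y P](unshiftK r); apply/eqP; rewrite -oppr_eq0 -HopD h.
Qed.

Lemma horn_solE f : B 0 0 * B 1 0 < 0 -> B 0 1 * B 1 1 < 0 ->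
  horn_sol B c f <-> rec_sol (absz (B 0 0)) (absz (B 1 0)) (absz (B 0 1)) (absz (B 1 1)) (f \o Y).
Proof.
move=> s0 s1; have fE : (f \o Y) \o xcoords = f by apply: funext => a /=; rewrite xcoordsK.
split=> [[f_fin Hf]|[fY_fin rec0 rec1]].
  by split; [exact: finsupp_comp f_fin | exact/(hop_recur _ s0) | exact/(hop_recur _ s1)].
split=> [|r]; first by rewrite -fE; exact: finsupp_comp fY_fin.
by case: (ord2_cases r) => ->; [apply/(hop_recur _ s0) | apply/(hop_recur _ s1)].
Qed.

End HornOperators.

Lemma xcoords_inverse (R : realType) (B : 'M[int]_2) (c : 'I_2 -> R[i]) : \det B != 0 ->
  exists2 Y, cancel Y (xcoords B c) & cancel (xcoords B c) Y.
Proof.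
rewrite det_mx2 -(intr_eq0 R[i]) intrB !intrM => detB.
pose Y P := (((B 1 1)%:~R * (P.1 - c 0) - (B 0 1)%:~R * (P.2 - c 1)) / (\det B)%:~R,
             ((B 0 0)%:~R * (P.2 - c 1) - (B 1 0)%:~R * (P.1 - c 0)) / (\det B)%:~R).
by exists Y => -[p1 p2]; rewrite /Y /xcoords /xcoord det_mx2 intrB !intrM /=;
  congr (_, _); field.
Qed.

Theorem lemma6p5 (R : realType) (B : 'M[int]_2) (c : 'I_2 -> R[i]) :
  \det B != 0 ->
  (forall k r, B k r != 0) ->
  B 0 0 * B 1 0 < 0 -> B 0 1 * B 1 1 < 0 ->
  horn_puiseux_dim B c
    (minn (absz (B 0 0 * B 1 1)) (absz (B 0 1 * B 1 0))).
Proof.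
move=> detB B_neq0 s0 s1; have [Y YK xcoordsK] := xcoords_inverse c detB.
apply: (has_basis_ext _ (fun f => iff_sym (horn_solE YK xcoordsK f s0 s1))).
apply: has_basis_comp xcoordsK YK _.
rewrite !abszM; apply: rec_sol_dim; rewrite ?absz_gt0 //.
exact: absz_cross_neq.
Qed.
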